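(* Let $n\ge1$, $0<\epsilon\le1$, $0\le\tau<1$, and let $G=(V,E)$ be a comparison graph. Let $P$ be a distribution on $[n]$ with $\|P-U_n\|\ge\epsilon$ and $|E|(\mu_P-\mu_P^2)\ge c(G)(\gamma_P-\mu_P^2)$. If $|E|\ge\dfrac{16n}{(1-\tau)^2\epsilon^4}$, then the collision-based algorithm $(G,\tau)$ outputs YES on $P$ with probability at most $1/4$.
   Context: $U_n$ is the uniform distribution on $[n]$; $\|P-Q\|=\sum_i|P_i-Q_i|$. $\mu_P=\sum_iP_i^2$, $\gamma_P=\sum_iP_i^3$. A comparison graph is a finite simple undirected graph $G=(V,E)$; $c(G)$ is the number of ordered triples $(u,v,w)$ of distinct vertices with $\{u,v\},\{v,w\}\in E$. Given $P$, each vertex $v$ receives an independent sample $S(v)\sim P$; for $e=\{u,v\}\in E$, $\mathbf 1_e=\mathbf 1[S(u)=S(v)]$; $Z=\sum_{e\in E}\mathbf 1_e$ and $T=|E|\frac{1+\tau\epsilon^2}{n}$; the algorithm $(G,\tau)$ outputs YES if $Z<T$ and NO otherwise. *)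

From HB Require Import structures.
From mathcomp Require Import all_boot all_order all_algebra.
Set Implicit Arguments. Unset Strict Implicit. Unset Printing Implicit Defensive.
Import Order.TTheory GRing.Theory Num.Theory.
Local Open Scope ring_scope.

Definition is_distr (R : realFieldType) (n : nat) (P : {ffun 'I_n -> R}) : Prop :=
  (forall i, 0 <= P i) /\ \sum_(i < n) P i = 1.

Definition dist_unif (R : realFieldType) (n : nat) (P : {ffun 'I_n -> R}) : R :=
  \sum_(i < n) `|P i - n%:R^-1|.

Definition muP (R : realFieldType) (n : nat) (P : {ffun 'I_n -> R}) : R :=
  \sum_(i < n) P i ^+ 2.
Definition gammaP (R : realFieldType) (n : nat) (P : {ffun 'I_n -> R}) : R :=
  \sum_(i < n) P i ^+ 3.

Definition simple_graph (V : finType) (adj : rel V) : Prop :=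
  symmetric adj /\ irreflexive adj.

Definition edges (V : finType) (adj : rel V) : {set {set V}} :=
  [set [set x.1; x.2] | x in [set x : V * V | adj x.1 x.2]].

Definition cG (V : finType) (adj : rel V) : nat :=
  #|[set t : V * V * V |
      [&& t.1.1 != t.1.2, t.1.2 != t.2, t.1.1 != t.2,
          [set t.1.1; t.1.2] \in edges adj & [set t.1.2; t.2] \in edges adj]]|.

Definition coll (V : finType) (n : nat) (S : {ffun V -> 'I_n}) (e : {set V}) : bool :=
  [forall u in e, forall v in e, S u == S v].

Definition Zstat (V : finType) (adj : rel V) (n : nat) (S : {ffun V -> 'I_n}) : nat :=
  #|[set e in edges adj | coll S e]|.

Definition thresh (R : realFieldType) (V : finType) (adj : rel V) (n : nat) (tau eps : R) : R :=
  (#|edges adj|%:R * (1 + tau * eps ^+ 2)) / n%:R.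

(* Probability (over independent samples S(v) ~ P) that the algorithm outputs YES, i.e. Z < T *)
Definition prob_yes (R : realFieldType) (V : finType) (adj : rel V) (n : nat)
  (tau eps : R) (P : {ffun 'I_n -> R}) : R :=
  \sum_(S : {ffun V -> 'I_n} | (Zstat adj S)%:R < thresh adj n tau eps)
     \prod_(v : V) P (S v).

From HB Require Import structures.
From mathcomp Require Import all_boot all_order all_algebra.
From mathcomp Require Import ring lra.
Set Implicit Arguments. Unset Strict Implicit. Unset Printing Implicit Defensive.
Import Order.TTheory GRing.Theory Num.Theory.
Local Open Scope ring_scope.

(* The statistic Z counts monochromatic edges when every vertex receives an
   independent sample of P.  The proof is Chebyshev's inequality:
   - Product measure: expectation over samples S : V -> [n], factorisation
     over coordinates, and the lower-tail Chebyshev bound.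
   - Collisions: an edge is monochromatic with probability mu = sum_i P_i^2;
     two distinct edges sharing a vertex with probability gamma = sum_i P_i^3;
     disjoint edges independently.  Hence E Z = |E| mu and
     Var Z = |E| (mu - mu^2) + a (gamma - mu^2), where a <= c(G) counts the
     ordered pairs of adjacent edges; the hypothesis gives Var Z <= 2 |E| mu.
   - Distance: by Cauchy-Schwarz, eps^2 <= ||P - U_n||^2 <= n mu - 1, so the
     mean exceeds the threshold T by at least |E| (1 - tau) (mu - 1/n).
   - Arithmetic: the sample-size bound on |E| turns Var Z / (E Z - T)^2 into
     at most 1/4. *)

Section ProductMeasure.
Variables (R : realFieldType) (I V : finType) (P : {ffun I -> R}).
Hypothesis P_ge0 : forall i, 0 <= P i.
Hypothesis P_sum1 : \sum_i P i = 1.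

Definition weight (S : {ffun V -> I}) : R := \prod_v P (S v).

Definition expect (f : {ffun V -> I} -> R) : R := \sum_S weight S * f S.

Lemma weight_ge0 S : 0 <= weight S.
Proof. by apply: prodr_ge0 => v _. Qed.

Lemma weight_sum1 : \sum_S weight S = 1.
Proof.
rewrite /weight -(bigA_distr_bigA (fun (_ : V) (i : I) => P i)) /=.
by rewrite big1 // => v _; rewrite P_sum1.
Qed.

Lemma eq_expect f g : f =1 g -> expect f = expect g.
Proof. by move=> fg; apply: eq_bigr => S _; rewrite fg. Qed.

Lemma expect_sum (J : finType) (Q : pred J) (F : J -> {ffun V -> I} -> R) :
  expect (fun S => \sum_(j | Q j) F j S) = \sum_(j | Q j) expect (F j).
Proof. by rewrite /expect exchange_big; apply: eq_bigr => S _; rewrite mulr_sumr. Qed.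

Lemma expect_prod (g : V -> I -> R) :
  expect (fun S => \prod_v g v (S v)) = \prod_v \sum_i P i * g v i.
Proof.
by rewrite /expect /weight bigA_distr_bigA; apply: eq_bigr => S _; rewrite -big_split.
Qed.

Lemma expect_sqrB f m :
  expect (fun S => (f S - m) ^+ 2) = expect (fun S => f S ^+ 2) - 2 * m * expect f + m ^+ 2.
Proof.
rewrite /expect.
transitivity (\sum_S (weight S * f S ^+ 2 - 2 * m * (weight S * f S) + m ^+ 2 * weight S)).
  by apply: eq_bigr => S _; ring.
by rewrite big_split sumrB /= -!mulr_sumr weight_sum1 mulr1.
Qed.

Lemma chebyshev_lower f T m : T < m ->
  \sum_(S | f S < T) weight S <= expect (fun S => (f S - m) ^+ 2) / (m - T) ^+ 2.
Proof.
move=> Tm; have gap0 : 0 < (m - T) ^+ 2 by rewrite exprn_gt0 // subr_gt0.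
rewrite ler_pdivlMr // mulr_suml /expect big_mkcond /=; apply: ler_sum => S _.
have w0 := weight_ge0 S.
case: ifP => fT; last by rewrite mulr_ge0 ?sqr_ge0.
rewrite ler_wpM2l // !expr2; nra.
Qed.

Lemma expect_const_on (A B : {set V}) i j : [disjoint A & B] ->
  expect (fun S => (\prod_(v in A) ((S v == i)%:R : R)) * \prod_(v in B) ((S v == j)%:R : R))
  = P i ^+ #|A| * P j ^+ #|B|.
Proof.
move=> dAB.
have split_AB (a b : V -> R) : (\prod_(v in A) a v) * (\prod_(v in B) b v) =
    \prod_v (if v \in A then a v else if v \in B then b v else 1).
  rewrite [X in X * _]big_mkcond [X in _ * X]big_mkcond -big_split /=.
  apply: eq_bigr => v _; case: ifP => vA; case: ifP => vB; rewrite ?mulr1 ?mul1r //.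
  by rewrite (disjointFr dAB vA) in vB.
have pick k : \sum_l P l * (l == k)%:R = P k.
  rewrite (bigD1 k) //= eqxx mulr1 big1 ?addr0 // => l /negbTE ->; exact: mulr0.
pose g v (k : I) : R :=
  if v \in A then (k == i)%:R else if v \in B then (k == j)%:R else 1.
rewrite (eq_expect (g := fun S => \prod_v g v (S v))) => [|S]; last exact: split_AB.
rewrite expect_prod -!prodr_const split_AB; apply: eq_bigr => v _.
rewrite /g; case: ifP => _; first exact: pick.
case: ifP => _; first exact: pick.
by under eq_bigr do rewrite mulr1.
Qed.

End ProductMeasure.

Section Collisions.
Variables (R : realFieldType) (n : nat) (V : finType) (P : {ffun 'I_n -> R}).
Hypothesis P_sum1 : \sum_i P i = 1.

Lemma collP (S : {ffun V -> 'I_n}) (e : {set V}) :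
  reflect {in e &, forall u v, S u = S v} (coll S e).
Proof.
apply: (iffP forall_inP) => [H u v ue ve | H u ue].
  by move/forall_inP: (H u ue) => /(_ v ve)/eqP.
by apply/forall_inP => v ve; rewrite (H u v ue ve).
Qed.

Lemma coll_sum_colours (S : {ffun V -> 'I_n}) (e : {set V}) a : a \in e ->
  ((coll S e)%:R : R) = \sum_i \prod_(v in e) ((S v == i)%:R : R).
Proof.
move=> ae; rewrite (bigD1 (S a)) //= [X in _ + X]big1 ?addr0; last first.
  by move=> i ne; rewrite (bigD1 a) //= eq_sym (negbTE ne) mul0r.
have [/collP Hc | Hc] := boolP (coll S e).
  by rewrite big1 // => v ve; rewrite (Hc v a ve ae) eqxx.
have [u ue /forall_inPn [v ve Suv]] := forall_inPn Hc.
have [Sua | Sua] := eqVneq (S u) (S a).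
  by rewrite (bigD1 v) //= -Sua eq_sym (negbTE Suv) mul0r.
by rewrite (bigD1 u) //= (negbTE Sua) mul0r.
Qed.

Lemma coll_union (S : {ffun V -> 'I_n}) (e f : {set V}) : e :&: f != set0 ->
  coll S e && coll S f = coll S (e :|: f).
Proof.
case/set0Pn => c; rewrite inE => /andP [ce cf].
apply/andP/collP => [[/collP He /collP Hf] u v | H].
  rewrite !inE => /orP [ue|uf] /orP [ve|vf].
  - exact: He.
  - by rewrite (He u c) // (Hf c v).
  - by rewrite (Hf u c) // (He c v).
  - exact: Hf.
by split; apply/collP => u v ue ve; apply: H; rewrite inE ?ue ?ve ?orbT.
Qed.

Local Notation expect := (expect P).

Lemma expect_coll (e : {set V}) a : a \in e ->
  expect (fun S => (coll S e)%:R) = \sum_i P i ^+ #|e|.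
Proof.
move=> ae; rewrite (eq_expect P (g := fun S => \sum_i ((\prod_(v in e) ((S v == i)%:R : R))
   * \prod_(v in set0) ((S v == i)%:R : R)))) => [|S]; last first.
  by rewrite (coll_sum_colours _ ae); apply: eq_bigr => i _; rewrite big_set0 mulr1.
rewrite expect_sum; apply: eq_bigr => i _.
by rewrite expect_const_on ?cards0 ?mulr1 // -setI_eq0 setI0.
Qed.

Lemma expect_coll_disjoint (e f : {set V}) a b : a \in e -> b \in f -> [disjoint e & f] ->
  expect (fun S => (coll S e)%:R * (coll S f)%:R)
  = (\sum_i P i ^+ #|e|) * \sum_i P i ^+ #|f|.
Proof.
move=> ae bf def.
rewrite (eq_expect P (g := fun S => \sum_i \sum_j ((\prod_(v in e) ((S v == i)%:R : R))
   * \prod_(v in f) ((S v == j)%:R : R)))) => [|S]; last first.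
  rewrite (coll_sum_colours _ ae) (coll_sum_colours _ bf) mulr_suml.
  by apply: eq_bigr => i _; rewrite mulr_sumr.
rewrite expect_sum mulr_suml; apply: eq_bigr => i _; rewrite expect_sum mulr_sumr.
by apply: eq_bigr => j _; rewrite expect_const_on.
Qed.

End Collisions.

Section Edges.
Variables (V : finType) (adj : rel V).
Hypothesis adj_simple : simple_graph adj.

Lemma edgesP e : reflect (exists a b, adj a b /\ e = [set a; b]) (e \in edges adj).
Proof.
apply: (iffP imsetP) => [[x] | [a [b [ab ->]]]].
  by rewrite inE => ax ->; exists x.1, x.2.
by exists (a, b); rewrite // inE.
Qed.

Lemma adj_neq a b : adj a b -> a != b.
Proof. by move=> ab; apply/eqP => eab; move: ab; rewrite eab (proj2 adj_simple). Qed.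

Lemma edge_card e : e \in edges adj -> #|e| = 2.
Proof. by case/edgesP => a [b [ab ->]]; rewrite cards2 adj_neq. Qed.

Lemma edge_witness e : e \in edges adj -> exists a, a \in e.
Proof. by move/edge_card => ce; apply/set0Pn; rewrite -card_gt0 ce. Qed.

Lemma edge_through e x : e \in edges adj -> x \in e -> exists2 u, u != x & e = [set x; u].
Proof.
case/edgesP => a [b [ab ->]]; rewrite !inE => /orP [] /eqP ->.
  by exists b; rewrite // eq_sym adj_neq.
by exists a; rewrite 1?setUC // adj_neq.
Qed.

Lemma edge_union_card e f : e \in edges adj -> f \in edges adj -> e != f ->
  e :&: f != set0 -> #|e :|: f| = 3.
Proof.
move=> eE fE nef meet.
have c1 : (0 < #|e :&: f|)%N by rewrite card_gt0.
have c2 : (#|e :&: f| < 2)%N.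
  rewrite ltnNge; apply: contra nef => c2.
  have /eqP <- : e :&: f == e by rewrite eqEcard subsetIl (edge_card eE).
  by rewrite eqEcard subsetIr (edge_card fE).
by rewrite cardsU (edge_card eE) (edge_card fE); move: c1 c2; case: #|_| => [|[|]].
Qed.

Definition adjacent_edge_pairs : {set {set V} * {set V}} :=
  [set p | [&& p.1 \in edges adj, p.2 \in edges adj, p.1 != p.2 & p.1 :&: p.2 != set0]].

(* Each such pair {x,u},{x,w} comes from the path (u, x, w), so there are at
   most c(G) of them. *)
Lemma adjacent_edge_pairs_le_cG : (#|adjacent_edge_pairs| <= cG adj)%N.
Proof.
pose path3 (t : V * V * V) := ([set t.1.1; t.1.2], [set t.1.2; t.2]).
apply: leq_trans (leq_imset_card path3 _); apply: subset_leq_card.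
apply/subsetP => -[e f]; rewrite inE /= => /and4P [eE fE nef /set0Pn [x]].
rewrite inE => /andP [xe xf].
have [u ux eu] := edge_through eE xe; have [w wx fw] := edge_through fE xf.
subst e f; apply/imsetP; exists (u, x, w); last by rewrite /path3 /= setUC.
rewrite inE /= ux eq_sym wx /= setUC eE fE andbT andbT.
by apply: contra nef => /eqP ->.
Qed.

End Edges.

Section Moments.
Variables (R : realFieldType) (n : nat) (V : finType) (adj : rel V).
Variable P : {ffun 'I_n -> R}.
Hypothesis adj_simple : simple_graph adj.
Hypothesis P_distr : is_distr P.

Let P_ge0 : forall i, 0 <= P i := proj1 P_distr.
Let P_sum1 : \sum_i P i = 1 := proj2 P_distr.
Local Notation expect := (expect P).
Local Notation mu := (muP P).
Local Notation gamma := (gammaP P).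
Local Notation E := (edges adj).
Local Notation Z S := ((Zstat adj S)%:R : R).

(* gamma - mu^2 = sum_i P_i (P_i - mu)^2 is a variance, hence nonnegative. *)
Lemma mu_sqr_le_gamma : mu ^+ 2 <= gamma.
Proof.
have -> : gamma = mu ^+ 2 + \sum_i P i * (P i - mu) ^+ 2.
  transitivity (mu ^+ 2 + \sum_i (P i ^+ 3 - 2 * mu * P i ^+ 2 + mu ^+ 2 * P i)).
    by rewrite big_split sumrB /= -!mulr_sumr P_sum1 /gammaP /muP; ring.
  by congr (_ + _); apply: eq_bigr => i _; ring.
by rewrite lerDl; apply: sumr_ge0 => i _; rewrite mulr_ge0 ?sqr_ge0.
Qed.

Lemma Zstat_sum (S : {ffun V -> 'I_n}) : Z S = \sum_(e in E) ((coll S e)%:R : R).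
Proof.
rewrite /Zstat -sum1_card natr_sum (eq_bigl (fun e => (e \in E) && coll S e)) => [|e].
  by rewrite big_mkcondr /=; apply: eq_bigr => e _; case: (coll S e).
by rewrite inE.
Qed.

Lemma Zstat_sqr_sum (S : {ffun V -> 'I_n}) :
  Z S ^+ 2 = \sum_(p in setX E E) ((coll S p.1)%:R * (coll S p.2)%:R : R).
Proof.
rewrite Zstat_sum expr2 mulr_suml.
under eq_bigr do rewrite mulr_sumr.
by rewrite pair_big_dep; apply: eq_bigl => -[e f]; rewrite in_setX.
Qed.

Lemma expect_coll_pair e f : e \in E -> f \in E ->
  expect (fun S => (coll S e)%:R * (coll S f)%:R) =
  mu ^+ 2 + (e == f)%:R * (mu - mu ^+ 2)
  + ((e, f) \in adjacent_edge_pairs adj)%:R * (gamma - mu ^+ 2).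
Proof.
move=> eE fE; rewrite inE /= eE fE /=.
have [a ae] := edge_witness adj_simple eE; have [b bf] := edge_witness adj_simple fE.
have [<-|nef] /= := eqVneq e f.
  rewrite (eq_expect P (g := fun S => (coll S e)%:R)) => [|S]; last first.
    by rewrite -natrM mulnb andbb.
  by rewrite (expect_coll P_sum1 ae) (edge_card adj_simple eE) /muP; ring.
have [meet|meet] /= := boolP (e :&: f == set0).
  rewrite (expect_coll_disjoint P_sum1 ae bf); last by rewrite -setI_eq0.
  by rewrite (edge_card adj_simple eE) (edge_card adj_simple fE) /muP; ring.
have aU : a \in e :|: f by rewrite inE ae.
rewrite (eq_expect P (g := fun S => (coll S (e :|: f))%:R)) => [|S]; last first.
  by rewrite -natrM mulnb coll_union.
by rewrite (expect_coll P_sum1 aU) (edge_union_card adj_simple eE fE nef meet) /gammaP; ring.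
Qed.

Lemma expect_Zstat : expect (fun S => Z S) = #|E|%:R * mu.
Proof.
rewrite (eq_expect P (g := fun S => \sum_(e in E) ((coll S e)%:R : R))) => [|S]; last first.
  exact: Zstat_sum.
rewrite expect_sum (eq_bigr (fun _ => mu)) ?sumr_const ?mulr_natl // => e eE.
have [a ae] := edge_witness adj_simple eE.
by rewrite (expect_coll P_sum1 ae) (edge_card adj_simple eE).
Qed.

Lemma expect_Zstat_sqr : expect (fun S => Z S ^+ 2) =
  #|E|%:R ^+ 2 * mu ^+ 2 + #|E|%:R * (mu - mu ^+ 2)
  + #|adjacent_edge_pairs adj|%:R * (gamma - mu ^+ 2).
Proof.
rewrite (eq_expect P (g := fun S => \sum_(p in setX E E)
    ((coll S p.1)%:R * (coll S p.2)%:R : R))) => [|S]; last exact: Zstat_sqr_sum.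
rewrite expect_sum.
rewrite (eq_bigr (fun p => mu ^+ 2 + (p.1 == p.2)%:R * (mu - mu ^+ 2)
  + (p \in adjacent_edge_pairs adj)%:R * (gamma - mu ^+ 2))); last first.
  by case=> e f; rewrite in_setX => /andP [eE fE]; rewrite expect_coll_pair.
rewrite !big_split /= -!mulr_suml sumr_const cardsX.
have -> : \sum_(p in setX E E) ((p.1 == p.2)%:R : R) = #|E|%:R.
  transitivity (\sum_(e in E) \sum_(f in E) ((e == f)%:R : R)).
    by rewrite pair_big_dep; apply: eq_bigl => -[e f]; rewrite in_setX.
  rewrite -sum1_card natr_sum; apply: eq_bigr => e eE.
  by rewrite (bigD1 e) //= eqxx big1 ?addr0 // => f /andP [_ /negbTE]; rewrite eq_sym => ->.
have -> : \sum_(p in setX E E) ((p \in adjacent_edge_pairs adj)%:R : R)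
    = #|adjacent_edge_pairs adj|%:R.
  rewrite -sum1_card natr_sum big_mkcond [RHS]big_mkcond /=; apply: eq_bigr => -[e f] _.
  rewrite in_setX inE /=.
  by case: (e \in E); case: (f \in E) => //=; case: ifP.
ring.
Qed.

Lemma variance_Zstat_le :
  (cG adj)%:R * (gamma - mu ^+ 2) <= #|E|%:R * (mu - mu ^+ 2) ->
  expect (fun S => (Z S - #|E|%:R * mu) ^+ 2) <= 2 * #|E|%:R * mu.
Proof.
move=> hyp; rewrite expect_sqrB // expect_Zstat_sqr expect_Zstat.
have pairs_le : #|adjacent_edge_pairs adj|%:R * (gamma - mu ^+ 2)
    <= (cG adj)%:R * (gamma - mu ^+ 2) :> R.
  by rewrite ler_wpM2r ?subr_ge0 ?mu_sqr_le_gamma // ler_nat adjacent_edge_pairs_le_cG.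
have : 0 <= #|E|%:R * mu ^+ 2 :> R by rewrite mulr_ge0 ?sqr_ge0.
lra.
Qed.

End Moments.

(* Cauchy-Schwarz for the all-ones vector: (sum_i y_i)^2 <= #|I| sum_i y_i^2,
   from the nonnegativity of sum_{i,j} (y_i - y_j)^2. *)
Lemma sqr_sum_le_card_sum_sqr (R : realFieldType) (I : finType) (y : I -> R) :
  (\sum_i y i) ^+ 2 <= #|I|%:R * \sum_i y i ^+ 2.
Proof.
have : 0 <= \sum_i \sum_j (y i - y j) ^+ 2 by do 2!apply: sumr_ge0 => ? _; apply: sqr_ge0.
have -> : \sum_i \sum_j (y i - y j) ^+ 2
    = 2 * (#|I|%:R * \sum_i y i ^+ 2 - (\sum_i y i) ^+ 2).
  transitivity (\sum_i \sum_j (y i ^+ 2 + y j ^+ 2 - 2 * y i * y j)).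
    by apply: eq_bigr => i _; apply: eq_bigr => j _; ring.
  under eq_bigr do rewrite sumrB big_split sumr_const -mulr_sumr.
  rewrite sumrB big_split sumr_const -mulr_suml -mulr_sumr /= expr2 !sumrMnl.
  ring.
by rewrite pmulr_rge0 // subr_ge0.
Qed.

(* Far from uniform in L1 forces a large collision probability:
   ||P - U_n||^2 <= n sum_i (P_i - 1/n)^2 = n mu_P - 1. *)
Lemma dist_unif_sqr_le (R : realFieldType) (n : nat) (P : {ffun 'I_n -> R}) :
  (1 <= n)%N -> is_distr P -> dist_unif P ^+ 2 <= n%:R * muP P - 1.
Proof.
move=> n_ge1 [_ P_sum1].
have n_neq0 : n%:R != 0 :> R by rewrite pnatr_eq0 -lt0n.
have := sqr_sum_le_card_sum_sqr (fun i => `|P i - n%:R^-1|).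
rewrite card_ord -/(dist_unif P); under eq_bigr do rewrite real_normK ?num_real //.
suff -> : n%:R * \sum_i (P i - n%:R^-1) ^+ 2 = n%:R * muP P - 1 by [].
transitivity (n%:R * (\sum_i P i ^+ 2 - 2 * n%:R^-1 * \sum_i P i + \sum_(i < n) n%:R^-2)).
  congr (_ * _); rewrite mulr_sumr -sumrB -big_split /=.
  by apply: eq_bigr => i _; field.
by rewrite P_sum1 sumr_const card_ord /muP; field.
Qed.

(* The expected count |E| mu exceeds the threshold T by at least
   |E| (1 - tau) (mu - 1/n), since mu - 1/n >= eps^2 / n. *)
Lemma mean_threshold_gap (R : realFieldType) (N nn mu eps tau : R) :
  0 < nn -> 0 <= N -> 0 <= tau -> eps ^+ 2 <= nn * mu - 1 ->
  N * (1 - tau) * (mu - nn^-1) <= N * mu - N * (1 + tau * eps ^+ 2) / nn.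
Proof.
move=> nn_gt0 N_ge0 tau_ge0 far; rewrite -subr_ge0.
have -> : N * mu - N * (1 + tau * eps ^+ 2) / nn - N * (1 - tau) * (mu - nn^-1)
    = N * tau / nn * (nn * mu - 1 - eps ^+ 2) by field; rewrite gt_eqF.
by rewrite !mulr_ge0 ?invr_ge0 ?subr_ge0 // ltW.
Qed.

(* The sample-size condition |E| >= 16 n / ((1 - tau)^2 eps^4) makes the
   squared gap dominate the variance bound: 8 mu <= |E| (1-tau)^2 (mu - 1/n)^2.
   With y = n mu - 1 >= eps^2 this reads (1 + y) eps^4 <= 2 y^2. *)
Lemma sample_size_enough (R : realFieldType) (N nn mu eps tau : R) :
  0 < nn -> 0 < eps -> eps <= 1 -> tau < 1 -> eps ^+ 2 <= nn * mu - 1 ->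
  16 * nn / ((1 - tau) ^+ 2 * eps ^+ 4) <= N ->
  8 * mu <= N * (1 - tau) ^+ 2 * (mu - nn^-1) ^+ 2.
Proof.
move=> nn_gt0 eps_gt0 eps_le1 tau_lt1 far N_large.
set y := nn * mu - 1 in far.
have eps2_gt0 : 0 < eps ^+ 2 by rewrite exprn_gt0.
have eps4E : eps ^+ 4 = eps ^+ 2 * eps ^+ 2 by rewrite -exprD.
have eps4_le_y : eps ^+ 4 <= y.
  by apply: le_trans far; rewrite eps4E ger_pMl // expr_le1 // ltW.
have eps4_le_y2 : eps ^+ 4 <= y ^+ 2 by rewrite eps4E expr2 ler_pM // ltW.
have K_gt0 : 0 < (1 - tau) ^+ 2 * eps ^+ 4 by rewrite mulr_gt0 ?exprn_gt0 ?subr_gt0.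
have N_K : 16 * nn <= N * ((1 - tau) ^+ 2 * eps ^+ 4) by rewrite -ler_pdivrMr.
have y_ge0 : 0 <= y by apply: le_trans far; apply: ltW.
have key : 8 * (1 + y) * eps ^+ 4 <= 16 * y ^+ 2.
  have : y * eps ^+ 4 <= y * y by rewrite ler_wpM2l.
  by move: eps4_le_y2; rewrite expr2; lra.
have muE : mu = (1 + y) / nn by rewrite /y; field; rewrite gt_eqF.
have scale_gt0 : 0 < nn * eps ^+ 4 by rewrite mulr_gt0 ?exprn_gt0.
rewrite -(ler_pM2r scale_gt0) muE.
have -> : 8 * ((1 + y) / nn) * (nn * eps ^+ 4) = 8 * (1 + y) * eps ^+ 4.
  by field; rewrite gt_eqF.
have -> : N * (1 - tau) ^+ 2 * ((1 + y) / nn - nn^-1) ^+ 2 * (nn * eps ^+ 4)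
    = N * ((1 - tau) ^+ 2 * eps ^+ 4) * y ^+ 2 / nn by field; rewrite gt_eqF.
rewrite ler_pdivlMr //; apply: le_trans (_ : 16 * y ^+ 2 * nn <= _).
  by rewrite ler_wpM2r // ltW.
by rewrite mulrAC ler_wpM2r ?sqr_ge0.
Qed.

Lemma variance_over_gap_le_quarter (R : realFieldType) (var N mu c gap : R) :
  0 < N -> 0 < c -> N * c <= gap -> var <= 2 * N * mu -> 8 * mu <= N * c ^+ 2 ->
  var / gap ^+ 2 <= 1 / 4.
Proof.
move=> N_gt0 c_gt0 Nc_le_gap var_le enough.
have Nc_gt0 : 0 < N * c by rewrite mulr_gt0.
have gap_gt0 : 0 < gap by apply: lt_le_trans Nc_le_gap.
rewrite ler_pdivrMr ?exprn_gt0 //; apply: le_trans var_le _.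
apply: le_trans (_ : _ <= 1 / 4 * (N * c) ^+ 2) _; last first.
  by rewrite ler_wpM2l ?divr_ge0 // !expr2 ler_pM // ltW.
have : N * (8 * mu) <= N * (N * c ^+ 2) by rewrite ler_wpM2l // ltW.
rewrite exprMn expr2; lra.
Qed.

Theorem lemma10 (R : realFieldType) (n : nat) (eps tau : R)
  (V : finType) (adj : rel V) (P : {ffun 'I_n -> R}) :
  (1 <= n)%N ->
  0 < eps -> eps <= 1 ->
  0 <= tau -> tau < 1 ->
  simple_graph adj ->
  is_distr P ->
  eps <= dist_unif P ->
  #|edges adj|%:R * (muP P - muP P ^+ 2) >= (cG adj)%:R * (gammaP P - muP P ^+ 2) ->
  #|edges adj|%:R >= 16 * n%:R / ((1 - tau) ^+ 2 * eps ^+ 4) ->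
  prob_yes adj tau eps P <= 1 / 4.
Proof.
move=> n_ge1 eps_gt0 eps_le1 tau_ge0 tau_lt1 adj_simple P_distr eps_le_dist var_hyp N_large.
set N : R := #|edges adj|%:R in var_hyp N_large *.
set mu := muP P in var_hyp N_large *.
have n_gt0 : 0 < n%:R :> R by rewrite ltr0n.
have far : eps ^+ 2 <= n%:R * mu - 1.
  apply: le_trans (dist_unif_sqr_le n_ge1 P_distr).
  by rewrite !expr2 ler_pM // ltW.
have N_gt0 : 0 < N.
  apply: lt_le_trans N_large.
  by rewrite divr_gt0 ?mulr_gt0 ?exprn_gt0 ?subr_gt0.
have c_gt0 : 0 < (1 - tau) * (mu - n%:R^-1).
  rewrite mulr_gt0 ?subr_gt0 // -(ltr_pM2l n_gt0) mulfV ?gt_eqF //.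
  by rewrite -subr_gt0; apply: lt_le_trans far; rewrite exprn_gt0.
have gap := mean_threshold_gap n_gt0 (ltW N_gt0) tau_ge0 far.
rewrite -mulrA in gap.
have enough := sample_size_enough n_gt0 eps_gt0 eps_le1 tau_lt1 far N_large.
rewrite -mulrA -exprMn in enough.
have T_lt_mean : N * (1 + tau * eps ^+ 2) / n%:R < N * mu.
  by rewrite -subr_gt0; apply: lt_le_trans gap; rewrite mulr_gt0.
apply: le_trans (chebyshev_lower (proj1 P_distr) _ T_lt_mean) _.
apply: variance_over_gap_le_quarter N_gt0 c_gt0 gap _ enough.
exact: variance_Zstat_le.
Qed.
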